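(* For all integers $n_1,n_2\ge1$ there are polynomials $q_{n_1,n_2}$ (in three variables) and $r_{n_1,n_2}$ (in four variables), all of whose terms have degree exactly $n_1+n_2-2$, such that for all real $a,b,c,d$, $$a^{n_1}c^{n_2}+b^{n_1}d^{n_2}-2\left(\frac{a+b}{2}\right)^{n_1}\left(\frac{c+d}{2}\right)^{n_2}=(a-b)^2q_{n_1,n_2}(a,b,d)+(c-d)^2q_{n_2,n_1}(c,d,b)+(a-b)(c-d)\,r_{n_1,n_2}(a,b,c,d).$$ Moreover, for $n_1=n_2=1$, $q_{1,1}(a,b,d)=0$ and $r_{1,1}(a,b,c,d)=\tfrac12$. *)

From mathcomp Require Import all_boot all_order all_algebra.
From mathcomp Require Export mpoly.
Set Implicit Arguments. Unset Strict Implicit. Unset Printing Implicit Defensive.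

From mathcomp Require Import all_boot all_order all_algebra.
From mathcomp Require Import mpoly.
From mathcomp Require Import ring zify.
Set Implicit Arguments.
Unset Strict Implicit.
Unset Printing Implicit Defensive.

Import GRing.Theory Num.Theory.
Local Open Scope ring_scope.

(* Write s = (a + b)/2 and t = (c + d)/2. Since a^n - b^n = (a - b) P_n(a, b)
   with P_n(a, b) = sum_i a^(n-1-i) b^i, and a - s = s - b = (a - b)/2, the
   Jensen gap a^n + b^n - 2 s^n = (a - s) P_n(s, a) - (s - b) P_n(s, b) equals
   (a - b)/2 * sum_i s^(n-1-i) (a^i - b^i), hence is (a - b)^2 times a form of
   degree n - 2.  The two-point identity then follows from
     a^n1 c^n2 + b^n1 d^n2 - 2 s^n1 t^n2
       = d^n2 (a^n1 + b^n1 - 2 s^n1) + b^n1 (c^n2 + d^n2 - 2 t^n2)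
         + (a^n1 - b^n1)(c^n2 - d^n2) - 2 (s^n1 - b^n1)(t^n2 - d^n2),
   where each product of differences is divisible by (a - b)(c - d).
   Every step only uses 2 h = 1, so the coefficients are defined over any ring
   with a half h and then taken in polynomial rings at h = 1/2. *)

Section Coefficients.
Variables (T : pzRingType) (h : T).

Definition geom_sum n (x y : T) : T := \sum_(i < n) x ^+ (n.-1 - i) * y ^+ i.

Definition mid (x y : T) : T := (x + y) * h.

Definition jensen_quot n (x y : T) : T :=
  h * \sum_(i < n) mid x y ^+ (n.-1 - i) * geom_sum i x y.

Definition qcoef n1 n2 (a b d : T) : T := d ^+ n2 * jensen_quot n1 a b.

Definition rcoef n1 n2 (a b c d : T) : T :=
  geom_sum n1 a b * geom_sum n2 c d
  - h * geom_sum n1 (mid a b) b * geom_sum n2 (mid c d) d.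

Lemma jensen_quot1 x y : jensen_quot 1 x y = 0.
Proof. by rewrite /jensen_quot big_ord1 /geom_sum big_ord0 !mulr0. Qed.

End Coefficients.

Section Identity.
Variables (T : comPzRingType) (h : T).
Hypothesis h2 : 2 * h = 1.

Lemma mul_subr_geom_sum n (x y : T) :
  (x - y) * geom_sum n x y = x ^+ n - y ^+ n.
Proof. by rewrite subrXX. Qed.

Lemma mid_subr (x y : T) : mid h x y - y = (x - y) * h.
Proof. by rewrite /mid -[y in _ - y]mul1r -h2; ring. Qed.

Lemma subr_mid (x y : T) : x - mid h x y = (x - y) * h.
Proof. by rewrite /mid -[x in x - _]mul1r -h2; ring. Qed.

Lemma mid_subrM (x y z w : T) :
  2 * (mid h x y - y) * (mid h z w - w) = h * (x - y) * (z - w).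
Proof. by rewrite !mid_subr -[in RHS](mul1r h) -[in RHS]h2; ring. Qed.

Lemma sqr_subr_mul_jensen_quot n (x y : T) :
  (x - y) ^+ 2 * jensen_quot h n x y = x ^+ n + y ^+ n - 2 * mid h x y ^+ n.
Proof.
have -> : (x - y) ^+ 2 * jensen_quot h n x y = (x - y) * h *
    \sum_(i < n) mid h x y ^+ (n.-1 - i) * ((x - y) * geom_sum i x y).
  by rewrite /jensen_quot !mulr_sumr; apply: eq_bigr => i _; ring.
under eq_bigr => i _ do rewrite mul_subr_geom_sum mulrBr.
rewrite sumrB -!/(geom_sum n _ _) mulrBr.
rewrite -[in X in X - _]subr_mid -[in X in _ - X]mid_subr.
by rewrite -[x - _]opprB mulNr !mul_subr_geom_sum; ring.
Qed.

Lemma sqr_subr_mul_qcoef n1 n2 (x y z : T) :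
  (x - y) ^+ 2 * qcoef h n1 n2 x y z
  = z ^+ n2 * (x ^+ n1 + y ^+ n1 - 2 * mid h x y ^+ n1).
Proof. by rewrite mulrCA sqr_subr_mul_jensen_quot. Qed.

Lemma subr_mul_rcoef n1 n2 (a b c d : T) :
  (a - b) * (c - d) * rcoef h n1 n2 a b c d
  = (a ^+ n1 - b ^+ n1) * (c ^+ n2 - d ^+ n2)
    - 2 * (mid h a b ^+ n1 - b ^+ n1) * (mid h c d ^+ n2 - d ^+ n2).
Proof.
rewrite -!mul_subr_geom_sum.
transitivity ((a - b) * geom_sum n1 a b * ((c - d) * geom_sum n2 c d)
  - h * (a - b) * (c - d)
    * (geom_sum n1 (mid h a b) b * geom_sum n2 (mid h c d) d)).
  by rewrite /rcoef; ring.
by rewrite -mid_subrM; ring.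
Qed.

Lemma jensen_product_decomposition n1 n2 (a b c d : T) :
  a ^+ n1 * c ^+ n2 + b ^+ n1 * d ^+ n2
    - 2 * mid h a b ^+ n1 * mid h c d ^+ n2
  = (a - b) ^+ 2 * qcoef h n1 n2 a b d + (c - d) ^+ 2 * qcoef h n2 n1 c d b
    + (a - b) * (c - d) * rcoef h n1 n2 a b c d.
Proof. by rewrite !sqr_subr_mul_qcoef subr_mul_rcoef; ring. Qed.

Lemma rcoef11 (a b c d : T) : rcoef h 1 1 a b c d = h.
Proof.
by rewrite /rcoef /geom_sum !big_ord1 !expr0 !mulr1 -[X in X - _]h2; ring.
Qed.

End Identity.

Section Morphism.
Variables (T S : pzRingType) (f : {rmorphism T -> S}) (h : T).

Lemma rmorph_geom_sum n (x y : T) : f (geom_sum n x y) = geom_sum n (f x) (f y).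
Proof.
by rewrite rmorph_sum; apply: eq_bigr => i _; rewrite rmorphM !rmorphXn.
Qed.

Lemma rmorph_mid (x y : T) : f (mid h x y) = mid (f h) (f x) (f y).
Proof. by rewrite rmorphM rmorphD. Qed.

Lemma rmorph_jensen_quot n (x y : T) :
  f (jensen_quot h n x y) = jensen_quot (f h) n (f x) (f y).
Proof.
rewrite rmorphM rmorph_sum; congr (_ * _); apply: eq_bigr => i _.
by rewrite rmorphM rmorphXn rmorph_mid rmorph_geom_sum.
Qed.

Lemma rmorph_qcoef n1 n2 (a b d : T) :
  f (qcoef h n1 n2 a b d) = qcoef (f h) n1 n2 (f a) (f b) (f d).
Proof. by rewrite rmorphM rmorphXn rmorph_jensen_quot. Qed.

Lemma rmorph_rcoef n1 n2 (a b c d : T) :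
  f (rcoef h n1 n2 a b c d) = rcoef (f h) n1 n2 (f a) (f b) (f c) (f d).
Proof. by rewrite rmorphB !rmorphM !rmorph_geom_sum !rmorph_mid. Qed.

End Morphism.

Section Homogeneity.
Variables (k : nat) (R : nzRingType) (c : R).
Implicit Types (p q x y z w : {mpoly R[k]}).

Lemma dhomogM_eq d e m p q :
  p \is d.-homog -> q \is e.-homog -> (d + e)%N = m -> p * q \is m.-homog.
Proof. by move=> hp hq <-; exact: dhomogM. Qed.

Lemma dhomog_mpolyX (i : 'I_k) : ('X_i : {mpoly R[k]}) \is 1.-homog.
Proof. by rewrite dhomogX; apply/eqP; exact: mdeg1. Qed.

Lemma dhomog_mpolyC : (c%:MP : {mpoly R[k]}) \is 0.-homog.
Proof. by rewrite -alg_mpolyC dhomogZ // dhomog1. Qed.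

Lemma dhomog_geom_sum n x y :
  x \is 1.-homog -> y \is 1.-homog -> geom_sum n x y \is n.-1.-homog.
Proof.
move=> hx hy; apply: rpred_sum => i _.
apply: dhomogM_eq (dhomogMn _ hx) (dhomogMn _ hy) _.
by have := ltn_ord i; lia.
Qed.

Lemma dhomog_mid x y :
  x \is 1.-homog -> y \is 1.-homog -> mid c%:MP x y \is 1.-homog.
Proof. by move=> hx hy; exact: dhomogM_eq (rpredD hx hy) dhomog_mpolyC _. Qed.

Lemma dhomog_jensen_quot n x y :
  x \is 1.-homog -> y \is 1.-homog ->
  jensen_quot c%:MP n x y \is (n - 2).-homog.
Proof.
move=> hx hy; apply: dhomogM_eq dhomog_mpolyC _ (add0n _).
apply: rpred_sum => -[[|i] lt_i_n] _.
  by rewrite /geom_sum big_ord0 mulr0 rpred0.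
apply: dhomogM_eq (dhomogMn _ (dhomog_mid hx hy)) (dhomog_geom_sum _ hx hy) _.
by rewrite /=; lia.
Qed.

Lemma dhomog_qcoef n1 n2 x y z : (1 <= n1)%N ->
  x \is 1.-homog -> y \is 1.-homog -> z \is 1.-homog ->
  qcoef c%:MP n1 n2 x y z \is (n1 + n2 - 2).-homog.
Proof.
move=> n1_gt0 hx hy hz; have [->|n1_ne1] := eqVneq n1 1%N.
  by rewrite /qcoef jensen_quot1 mulr0 rpred0.
apply: dhomogM_eq (dhomogMn _ hz) (dhomog_jensen_quot _ hx hy) _.
by lia.
Qed.

Lemma dhomog_rcoef n1 n2 x y z w : (1 <= n1)%N -> (1 <= n2)%N ->
  x \is 1.-homog -> y \is 1.-homog -> z \is 1.-homog -> w \is 1.-homog ->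
  rcoef c%:MP n1 n2 x y z w \is (n1 + n2 - 2).-homog.
Proof.
move=> n1_gt0 n2_gt0 hx hy hz hw.
have deg : (n1.-1 + n2.-1 = n1 + n2 - 2)%N by lia.
apply: rpredB.
  exact: dhomogM_eq (dhomog_geom_sum _ hx hy) (dhomog_geom_sum _ hz hw) deg.
apply: dhomogM_eq (dhomog_geom_sum _ (dhomog_mid hz hw) hw) deg.
exact: dhomogM_eq dhomog_mpolyC (dhomog_geom_sum _ (dhomog_mid hx hy) hy) _.
Qed.

End Homogeneity.

Theorem lemmaA5 (R : realFieldType) :
  exists (q : nat -> nat -> {mpoly R[3]}) (r : nat -> nat -> {mpoly R[4]}),
    (forall n1 n2 : nat, (1 <= n1)%N -> (1 <= n2)%N ->
       [/\ q n1 n2 \is (n1 + n2 - 2)%N.-homog,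
           r n1 n2 \is (n1 + n2 - 2)%N.-homog &
           forall a b c d : R,
             a ^+ n1 * c ^+ n2 + b ^+ n1 * d ^+ n2
               - 2 * ((a + b) / 2) ^+ n1 * ((c + d) / 2) ^+ n2
             = (a - b) ^+ 2 * (q n1 n2).@[fun i : 'I_3 => [:: a; b; d]`_i]
               + (c - d) ^+ 2 * (q n2 n1).@[fun i : 'I_3 => [:: c; d; b]`_i]
               + (a - b) * (c - d)
                   * (r n1 n2).@[fun i : 'I_4 => [:: a; b; c; d]`_i]])
    /\ q 1%N 1%N = 0
    /\ r 1%N 1%N = (2^-1 : R)%:MP.
Proof.
set h : R := 2^-1; have h2 : 2 * h = 1 by rewrite mulfV // pnatr_eq0.
pose X3 i (lt_i3 : (i < 3)%N) : {mpoly R[3]} := 'X_(Ordinal lt_i3).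
pose X4 i (lt_i4 : (i < 4)%N) : {mpoly R[4]} := 'X_(Ordinal lt_i4).
exists (fun n1 n2 => qcoef h%:MP n1 n2 (X3 0 isT) (X3 1 isT) (X3 2 isT)).
exists (fun n1 n2 =>
  rcoef h%:MP n1 n2 (X4 0 isT) (X4 1 isT) (X4 2 isT) (X4 3 isT)).
split; last split.
- move=> n1 n2 n1_gt0 n2_gt0; split.
  + by apply: dhomog_qcoef => //; exact: dhomog_mpolyX.
  + by apply: dhomog_rcoef => //; exact: dhomog_mpolyX.
  + move=> a b c d.
    rewrite !(rmorph_qcoef (meval _)) (rmorph_rcoef (meval _)) /=.
    rewrite !mevalC !mevalXU /=.
    exact: jensen_product_decomposition.
- by rewrite /= /qcoef jensen_quot1 mulr0.
- by rewrite /= rcoef11 // -mpolyC_nat -mpolyCM h2.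
Qed.
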